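(* Let $\Gamma$ be a labeled oriented tree of Coxeter type with at least $3$ vertices, let $\Upsilon$ be its associated Coxeter tree, and assume that all edge labels $m_e$ of $\Upsilon$ satisfy $m_e\ge 3$. Then $G(\Gamma)$ is large.
   Context: A labeled oriented tree (LOT) $\Gamma$ is a finite tree with vertex set $\mathbf{x}$ whose edges are oriented and each edge is labeled by a (possibly empty) word $w$ in $\mathbf{x}^{\pm1}$; for the edge $e=(x\xrightarrow{w}y)$ set $r_e=xw(wy)^{-1}$; $G(\Gamma)=\langle\mathbf{x}\mid r_e,\ e\text{ an edge}\rangle$. $\Gamma$ is of Coxeter type if for every edge $e=(x\xrightarrow{w}y)$ every letter $z\ne x,y$ occurs in $w$ only with even exponents. For such $\Gamma$, each $r_e$ reduces, up to cyclic permutation, in $\langle\mathbf{x}\mid x^2,x\in\mathbf{x}\rangle$ to $(yx)^{m_e}$ with $m_e\ge1$ odd; the associated Coxeter tree $\Upsilon$ is obtained from $\Gamma$ by erasing orientations and edge words and labeling each edge $e$ by $m_e$. A group is large if it has a subgroup of finite index that admits an epimorphism onto a free group of rank $\ge 2$. *)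

From Stdlib Require List.
From mathcomp Require Import all_boot all_order all_algebra.
Set Implicit Arguments. Unset Strict Implicit. Unset Printing Implicit Defensive.

(* A letter (a, false) stands for a, (a, true) for a^{-1}. *)
Definition word (A : Type) := seq (A * bool).

Definition winv (A : Type) (w : word A) : word A :=
  rev (map (fun p => (p.1, ~~ p.2)) w).

Definition fpush (A : eqType) (a : A * bool) (w : word A) : word A :=
  match w with
  | b :: w' => if (a.1 == b.1) && (a.2 != b.2) then w' else a :: w
  | [::] => [:: a]
  end.
Definition freduce (A : eqType) (w : word A) : word A := foldr (@fpush A) [::] w.

(* A group is given by its carrier, an equality (setoid) relation and
   operations; the concrete groups below (free groups, presented groups)
   are genuine groups w.r.t. [geq]. *)
Record grp := Grp {
  gcar :> Type;
  geq : gcar -> gcar -> Prop;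
  gmul : gcar -> gcar -> gcar;
  ginv : gcar -> gcar;
  gone : gcar }.

Definition free_grp (A : eqType) : grp :=
  @Grp (word A) (fun u v => freduce u = freduce v) (@cat _) (@winv A) [::].

Inductive ncl (A : eqType) (R : word A -> Prop) : word A -> Prop :=
| ncl_nil : ncl R [::]
| ncl_conj (u r w : word A) (b : bool) :
    R r -> ncl R w -> ncl R (u ++ (if b then winv r else r) ++ winv u ++ w)
| ncl_red (w w' : word A) : freduce w = freduce w' -> ncl R w -> ncl R w'.

Definition presented_grp (A : eqType) (R : word A -> Prop) : grp :=
  @Grp (word A) (fun u v => ncl R (u ++ winv v)) (@cat _) (@winv A) [::].

Definition subgroup (G : grp) (H : G -> Prop) : Prop :=
  [/\ (forall x y, geq x y -> H x -> H y), H (gone G),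
      (forall x y, H x -> H y -> H (gmul x y)) &
      (forall x, H x -> H (ginv x))].

Definition finite_index (G : grp) (H : G -> Prop) : Prop :=
  exists s : seq G, forall g : G, exists t, List.In t s /\ H (gmul (ginv t) g).

Definition hom_on (G K : grp) (H : G -> Prop) (f : G -> K) : Prop :=
  (forall x y, H x -> H y -> geq x y -> geq (f x) (f y)) /\
  (forall x y, H x -> H y -> geq (f (gmul x y)) (gmul (f x) (f y))).

Definition surj_on (G K : grp) (H : G -> Prop) (f : G -> K) : Prop :=
  forall k : K, exists g, H g /\ geq (f g) k.

Definition large (G : grp) : Prop :=
  exists H : G -> Prop, subgroup H /\ finite_index H /\
    exists k : nat, 2 <= k /\
      exists f : G -> free_grp 'I_k, hom_on H f /\ surj_on H f.

(* vertex set X, edge set E, edge e = (src e --lab e--> tgt e) *)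
Definition lot_adj (X E : finType) (src tgt : E -> X) : rel X :=
  fun x y => [exists e, ((src e == x) && (tgt e == y)) || ((src e == y) && (tgt e == x))].

Definition is_tree (X E : finType) (src tgt : E -> X) : Prop :=
  0 < #|X| /\ #|E| = #|X| - 1 /\ (forall x y, connect (lot_adj src tgt) x y).

(* r_e = x w (w y)^{-1} *)
Definition lot_rel (X E : finType) (src tgt : E -> X) (lab : E -> word X) (e : E)
  : word X := [:: (src e, false)] ++ lab e ++ winv (lab e ++ [:: (tgt e, false)]).

Definition lot_group (X E : finType) (src tgt : E -> X) (lab : E -> word X) : grp :=
  presented_grp (fun r => exists e, r = lot_rel src tgt lab e).

Definition syl_push (A : eqType) (a : A * bool) (acc : seq (A * int)) : seq (A * int) :=
  let s : int := if a.2 then (-1)%R else 1%R in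
  match acc with
  | (b, n) :: t => if a.1 == b then (b, (s + n)%R) :: t else (a.1, s) :: acc
  | [::] => [:: (a.1, s)]
  end.
Definition syllables (A : eqType) (w : word A) : seq (A * int) :=
  foldr (@syl_push A) [::] w.

Definition coxeter_type (X E : finType) (src tgt : E -> X) (lab : E -> word X) : Prop :=
  forall e, all (fun p => (p.1 == src e) || (p.1 == tgt e) || (2 %| p.2)%Z)
                (syllables (freduce (lab e))).

Definition cpush (A : eqType) (a : A) (w : seq A) : seq A :=
  match w with
  | b :: w' => if a == b then w' else a :: w
  | [::] => [:: a]
  end.
Definition creduce (A : eqType) (w : seq A) : seq A := foldr (@cpush A) [::] w.
(* image of a free-group word in < X | x^2 > (x^{-1} = x there) *)
Definition cimage (A : eqType) (w : word A) : seq A := creduce (map fst w).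
(* conjugacy in < X | x^2 >  (u^{-1} = rev u there) *)
Definition cconj (A : eqType) (a b : seq A) : Prop :=
  exists u : seq A, creduce (u ++ a ++ rev u) = creduce b.

(* label m_e of edge e in the Coxeter tree: r_e is conjugate to (y x)^m *)
Definition coxeter_label (X E : finType) (src tgt : E -> X) (lab : E -> word X)
  (e : E) (m : nat) : Prop :=
  cconj (cimage (lot_rel src tgt lab e)) (flatten (nseq m [:: tgt e; src e])).

(* Two edges e1, e2 of the tree cut its vertex set into three classes, which are sent to
   the generators a, b, c of D = < a, b, c | a^2, b^2, c^2, (ab)^m1, (bc)^m2 > (m_i the
   label of e_i), so that e1 joins a to b and e2 joins b to c.  The image of r_e in
   < X | x^2 > is conjugate to (yx)^(m_e), which dies in D: it is (ab)^(m1) or (bc)^(m2)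
   up to orientation if e = e1, e2, and a power of x x = 1 otherwise.  D acts on
   Z/m1 x Z/m2 by affine reflections, and a 1-cocycle of this action with values in F_2
   turns closed walks at (0, 0) of the resulting Schreier graph into a homomorphism from
   the stabiliser of (0, 0), a subgroup of finite index of G(Gamma), onto F_2. *)

From HB Require Import structures.
From mathcomp Require Import all_boot all_order all_algebra.
From mathcomp Require Import ring zify.
From Stdlib Require Import Classical_Prop.
Set Implicit Arguments. Unset Strict Implicit. Unset Printing Implicit Defensive.
Import GRing.Theory.

(** * Free reduction *)

Section FreeGroup.
Variable A : eqType.
Implicit Types (u v w z : word A) (a b : A * bool).

Definition letter_inv a : A * bool := (a.1, ~~ a.2).
Definition cancels a b := (a.1 == b.1) && (a.2 != b.2).
Lemma letter_invK : involutive letter_inv.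
Proof. by case=> ? []. Qed.

Definition reduced w := sorted (fun a b => ~~ cancels a b) w.

Lemma fpush_reduced a z : reduced z -> reduced (fpush a z).
Proof.
case: z => [|b z] //= Hz; case: ifP => [_|Hab]; first exact: path_sorted Hz.
by rewrite /= /cancels Hab.
Qed.

Lemma freduce_reduced w : reduced (freduce w).
Proof. by elim: w => //= a w; apply: fpush_reduced. Qed.

Lemma fpush_letter_inv a z : reduced z -> fpush a (fpush (letter_inv a) z) = z.
Proof.
case: a => x bx; case: z => [|[y b] z] /=; first by rewrite eqxx; case: bx.
case: ifP => [/andP[/eqP <- Hb] | Hc] Hz.
  have Eb : b = bx by case: b bx Hb Hz => [] [].
  subst b; case: z Hz => [|[y' b'] z] //= /andP[/negPf].
  by rewrite /cancels /= => ->.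
by rewrite /= eqxx; case: bx Hc.
Qed.

Lemma freduce_id w : reduced w -> freduce w = w.
Proof.
elim: w => //= a w IH Hw; rewrite IH; last exact: path_sorted Hw.
by case: w Hw {IH} => [|b w] //= /andP[/negPf]; rewrite /cancels => ->.
Qed.

Lemma freduceK w : freduce (freduce w) = freduce w.
Proof. exact/freduce_id/freduce_reduced. Qed.

Lemma foldr_fpush_freduce z u : reduced z ->
  foldr (@fpush A) z u = foldr (@fpush A) z (freduce u).
Proof.
move=> Hz; elim: u => //= a u ->.
have: reduced (freduce u) by exact: freduce_reduced.
case: (freduce u) => [|b r] //= Hr; case: ifP => //= /andP[/eqP Eab Hab].
have -> : a = letter_inv b by case: a b Eab Hab {Hr} => x [] [y []] /= ->.
rewrite -{2}(letter_invK b) fpush_letter_inv //.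
by elim: r {Hr} => //= c r; apply: fpush_reduced.
Qed.

Lemma freduce_catE u v : freduce (u ++ v) = freduce (freduce u ++ freduce v).
Proof.
rewrite /freduce !foldr_cat -/(freduce v) -/(freduce (freduce v)) freduceK.
exact/foldr_fpush_freduce/freduce_reduced.
Qed.

Lemma winv_cons a w : winv (a :: w) = winv w ++ [:: letter_inv a].
Proof. by rewrite /winv /= rev_cons cats1. Qed.

Lemma winvK : involutive (@winv A).
Proof.
move=> w; rewrite /winv map_rev revK -map_comp.
by rewrite -[RHS]map_id; apply: eq_map => -[x []].
Qed.

Definition feq u v := freduce u = freduce v.

Lemma feq_refl u : feq u u. Proof. by []. Qed.
Lemma feq_sym u v : feq u v -> feq v u. Proof. by []. Qed.
Lemma feq_trans u v w : feq u v -> feq v w -> feq u w.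
Proof. by rewrite /feq => ->. Qed.

Lemma feq_cat u u' v v' : feq u u' -> feq v v' -> feq (u ++ v) (u' ++ v').
Proof. by rewrite /feq freduce_catE => -> ->; rewrite -freduce_catE. Qed.

Lemma feq_winvr w : feq (w ++ winv w) [::].
Proof.
suff cancel z : reduced z -> foldr (@fpush A) z (w ++ winv w) = z by exact: cancel.
elim: w z => //= a w IH z Hz.
by rewrite winv_cons catA foldr_cat /= IH ?fpush_reduced // fpush_letter_inv.
Qed.

Lemma feq_winvl w : feq (winv w ++ w) [::].
Proof. by have := feq_winvr (winv w); rewrite winvK. Qed.

Lemma feq_cat1l u v : feq u [::] -> feq (u ++ v) v.
Proof. by move=> H; exact: feq_cat H (feq_refl v). Qed.

Lemma feq_cat1r u v : feq v [::] -> feq (u ++ v) u.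
Proof. by move=> H; have := feq_cat (feq_refl u) H; rewrite cats0. Qed.

Lemma feq_cat_winv u v : feq (u ++ winv v) [::] -> feq u v.
Proof.
move=> H; apply: feq_trans (feq_sym (feq_cat1r u (feq_winvl v))) _.
by rewrite catA; exact: feq_cat1l.
Qed.

Lemma feq_winv u v : feq u v -> feq (winv u) (winv v).
Proof.
move=> H; apply: feq_cat_winv; rewrite winvK.
exact: feq_trans (feq_cat (feq_refl _) (feq_sym H)) (feq_winvl u).
Qed.

End FreeGroup.

(** * Walks along an involutive action carrying a cocycle *)

Definition alternating (T : Type) (n : nat) (x y : T) : seq T :=
  flatten (nseq n [:: x; y]).

Lemma alternatingS (T : Type) n (x y : T) :
  alternating n.+1 x y = [:: x, y & alternating n x y].
Proof. by []. Qed.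

Lemma rev_alternating (T : Type) n (x y : T) :
  rev (alternating n x y) = alternating n y x.
Proof.
elim: n => //= n IH; rewrite rev_cat IH.
by elim: n {IH} => //= n ->.
Qed.

Lemma map_alternating (T U : Type) (f : T -> U) n x y :
  map f (alternating n x y) = alternating n (f x) (f y).
Proof. by rewrite /alternating map_flatten map_nseq. Qed.

Section Walks.
Variables (B : eqType) (P L : Type) (act : L -> P -> P) (gam : P -> L -> word B).
Hypothesis actK : forall l, involutive (act l).
Hypothesis gam_cocycle : forall l p, feq (gam p l ++ gam (act l p) l) [::].

Definition walk_end (p : P) (s : seq L) : P := foldl (fun q l => act l q) p s.

Fixpoint walk_val (p : P) (s : seq L) : word B :=
  if s is l :: s' then gam p l ++ walk_val (act l p) s' else [::].

Lemma walk_end_cat p s t : walk_end p (s ++ t) = walk_end (walk_end p s) t.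
Proof. exact: foldl_cat. Qed.

Lemma walk_val_cat p s t :
  walk_val p (s ++ t) = walk_val p s ++ walk_val (walk_end p s) t.
Proof. by elim: s p => //= l s IH p; rewrite IH catA. Qed.

(* (act, gam) is an action l . (p, v) = (act l p, v * gam p l) of words in L on
   P x F(B); walk_equiv s t says that s and t act alike. *)
Definition walk_equiv (s t : seq L) :=
  forall p, walk_end p s = walk_end p t /\ feq (walk_val p s) (walk_val p t).

Definition null_walk (s : seq L) := walk_equiv s [::].

Lemma walk_equiv_refl s : walk_equiv s s.
Proof. by []. Qed.

Lemma walk_equiv_sym s t : walk_equiv s t -> walk_equiv t s.
Proof. by move=> H p; have [Ee Hv] := H p; rewrite Ee. Qed.

Lemma walk_equiv_trans s t u :
  walk_equiv s t -> walk_equiv t u -> walk_equiv s u.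
Proof.
move=> Hst Htu p; have [Es Vs] := Hst p; have [Et Vt] := Htu p.
by rewrite Es Et; split=> //; exact: feq_trans Vs Vt.
Qed.

Lemma walk_equiv_cat s s' t t' :
  walk_equiv s s' -> walk_equiv t t' -> walk_equiv (s ++ t) (s' ++ t').
Proof.
move=> Hs Ht p; have [Es Vs] := Hs p; rewrite !walk_end_cat !walk_val_cat Es.
by have [Et Vt] := Ht (walk_end p s'); split=> //; exact: feq_cat.
Qed.

Lemma null_walk_pair l : null_walk [:: l; l].
Proof. by move=> p; rewrite /= cats0 actK; split=> //; exact: gam_cocycle. Qed.

Lemma null_walk_cat_rev s : null_walk (s ++ rev s).
Proof.
elim: s => // l s IH.
have -> : (l :: s) ++ rev (l :: s) = [:: l] ++ (s ++ rev s) ++ [:: l].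
  by rewrite rev_cons -cats1 catA.
apply: walk_equiv_trans (null_walk_pair l).
exact: walk_equiv_cat (walk_equiv_refl _) (walk_equiv_cat IH (walk_equiv_refl _)).
Qed.

Lemma null_walk_rev_cat s : null_walk (rev s ++ s).
Proof. by rewrite -{2}(revK s); exact: null_walk_cat_rev. Qed.

Lemma walk_equiv_cat_rev s t : null_walk (s ++ rev t) -> walk_equiv s t.
Proof.
move=> H; have := walk_equiv_cat (walk_equiv_refl s) (null_walk_rev_cat t).
rewrite cats0 => /walk_equiv_sym Hs; apply: walk_equiv_trans Hs _.
by rewrite catA; exact: walk_equiv_cat H (walk_equiv_refl t).
Qed.

Lemma null_walk_rev s : null_walk s -> null_walk (rev s).
Proof.
move=> H; apply: walk_equiv_trans (null_walk_rev_cat s).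
by have := walk_equiv_cat (walk_equiv_refl (rev s)) (walk_equiv_sym H); rewrite cats0.
Qed.

Lemma null_walk_conj u c : null_walk (u ++ c ++ rev u) -> null_walk c.
Proof.
move=> H; have Hc : walk_equiv c (rev u ++ (u ++ c ++ rev u) ++ u).
  have := walk_equiv_cat (null_walk_rev_cat u)
    (walk_equiv_cat (walk_equiv_refl c) (null_walk_rev_cat u)).
  by rewrite cats0 -!catA; exact: walk_equiv_sym.
apply: walk_equiv_trans Hc (walk_equiv_trans _ (null_walk_rev_cat u)).
exact: walk_equiv_cat (walk_equiv_refl (rev u)) (walk_equiv_cat H (walk_equiv_refl u)).
Qed.

Lemma walk_end_rev p s : walk_end (walk_end p s) (rev s) = p.
Proof.
elim: s p => //= l s IH p.
by rewrite rev_cons -cats1 walk_end_cat IH /= actK.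
Qed.

Lemma walk_val_rev p s :
  feq (walk_val (walk_end p s) (rev s)) (winv (walk_val p s)).
Proof.
have [_] := null_walk_rev_cat s (walk_end p s).
by rewrite walk_val_cat walk_end_rev => H; apply: feq_cat_winv; rewrite winvK.
Qed.

Lemma null_walk_flatten_nseq n s : null_walk s -> null_walk (flatten (nseq n s)).
Proof.
by move=> H; elim: n => //= n IH; exact: walk_equiv_cat H IH.
Qed.

Lemma null_walk_alternating_same n l : null_walk (alternating n l l).
Proof. exact/null_walk_flatten_nseq/null_walk_pair. Qed.

Lemma null_walk_alternatingC n x y :
  null_walk (alternating n x y) -> null_walk (alternating n y x).
Proof. by move=> H; rewrite -rev_alternating; exact: null_walk_rev. Qed.

End Walks.

Section WalkReduction.
Variables (B : eqType) (P : Type) (L : eqType) (act : L -> P -> P) (gam : P -> L -> word B).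
Hypothesis actK : forall l, involutive (act l).
Hypothesis gam_cocycle : forall l p, feq (gam p l ++ gam (act l p) l) [::].

Local Notation walk_equiv := (walk_equiv act gam).
Local Notation null_walk := (null_walk act gam).

Lemma walk_equiv_cons l s t : walk_equiv s t -> walk_equiv (l :: s) (l :: t).
Proof. exact: walk_equiv_cat (walk_equiv_refl act gam [:: l]). Qed.

Lemma walk_equiv_cancel l s : walk_equiv [:: l, l & s] s.
Proof. exact: (walk_equiv_cat (null_walk_pair actK gam_cocycle l)). Qed.

Lemma walk_equiv_creduce s : walk_equiv (creduce s) s.
Proof.
elim: s => //= l s IH; apply: walk_equiv_trans (walk_equiv_cons l IH).
case: (creduce s) => //= l' s'; case: eqP => [<-|_] //.
exact: walk_equiv_sym (walk_equiv_cancel l s').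
Qed.

Lemma walk_equiv_freduce (w : word L) :
  walk_equiv (map fst (freduce w)) (map fst w).
Proof.
elim: w => //= a w IH; apply: walk_equiv_trans (walk_equiv_cons a.1 IH).
case: (freduce w) => //= b w'; case: ifP => [/andP[/eqP <- _]|_] //.
exact: walk_equiv_sym (walk_equiv_cancel a.1 _).
Qed.

Lemma null_walk_cconj s t : cconj s t -> null_walk t -> null_walk s.
Proof.
case=> u Hu Ht; apply: (null_walk_conj actK gam_cocycle (u := u)).
apply: walk_equiv_trans (walk_equiv_sym (walk_equiv_creduce _)) _.
by rewrite Hu; exact: walk_equiv_trans (walk_equiv_creduce t) Ht.
Qed.

Lemma null_walk_cimage (w : word L) t :
  cconj (cimage w) t -> null_walk t -> null_walk (map fst w).
Proof.
move=> Hwt /(null_walk_cconj Hwt) Hw.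
exact: walk_equiv_trans (walk_equiv_sym (walk_equiv_creduce _)) Hw.
Qed.

Lemma map_fst_winv (w : word L) : map fst (winv w) = rev (map fst w).
Proof. by rewrite /winv map_rev -map_comp. Qed.

Lemma null_walk_ncl (R : word L -> Prop) :
  (forall r, R r -> null_walk (map fst r)) ->
  forall w, ncl R w -> null_walk (map fst w).
Proof.
move=> HR w; elim=> {w} [|u r w b Rr _ Hw|w w' Eww' _ Hw] //.
  have Hrb : null_walk (map fst (if b then winv r else r)).
    case: b; rewrite ?map_fst_winv; last exact: HR.
    by apply: (null_walk_rev actK gam_cocycle); exact: HR.
  rewrite !map_cat map_fst_winv.
  apply: walk_equiv_trans (null_walk_cat_rev actK gam_cocycle (map fst u)).
  have := walk_equiv_cat (walk_equiv_refl act gam (map fst u)) (walk_equiv_cat Hrb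
    (walk_equiv_cat (walk_equiv_refl act gam (rev (map fst u))) Hw)).
  by rewrite cats0.
apply: walk_equiv_trans (walk_equiv_sym (walk_equiv_freduce w')) _.
by rewrite -Eww'; exact: walk_equiv_trans (walk_equiv_freduce w) Hw.
Qed.

End WalkReduction.

(** * Largeness from a finite action *)

Section WalkPullback.
Variables (B : eqType) (P L L' : Type) (act : L' -> P -> P) (gam : P -> L' -> word B).
Variable h : L -> L'.

Lemma walk_end_map p s :
  walk_end (fun l => act (h l)) p s = walk_end act p (map h s).
Proof. by elim: s p => //= l s IH p. Qed.

Lemma walk_val_map p s :
  walk_val (fun l => act (h l)) (fun q l => gam q (h l)) p s = walk_val act gam p (map h s).
Proof. by elim: s p => //= l s IH p; rewrite IH. Qed.

Lemma null_walk_map s : null_walk act gam (map h s) ->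
  null_walk (fun l => act (h l)) (fun q l => gam q (h l)) s.
Proof. by move=> H p; rewrite walk_end_map walk_val_map; exact: H. Qed.

End WalkPullback.

Lemma map_preimage (T U : Type) (f : T -> U) :
  (forall y, exists x, f x = y) -> forall t : seq U, exists s, map f s = t.
Proof.
move=> f_onto; elim=> [|y t [s <-]]; first by exists [::].
by have [x <-] := f_onto y; exists (x :: s).
Qed.

Lemma finite_image_transversal (T : Type) (P : finType) (f : T -> P) :
  exists s : seq T, forall x, exists y, List.In y s /\ f y = f x.
Proof.
suff [s Hs] : exists s : seq T,
    forall x, f x \in enum P -> exists y, List.In y s /\ f y = f x.
  by exists s => x; apply: Hs; rewrite mem_enum.
elim: (enum P) => [|q l [s Hs]]; first by exists [::].
have [[x0 Ex0]|Hq] := classic (exists x, f x = q).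
  exists (x0 :: s) => x; rewrite in_cons => /orP[/eqP ->|/Hs[y [Hy Ey]]].
    by exists x0; split; [left|].
  by exists y; split; [right|].
exists s => x; rewrite in_cons => /orP[/eqP Ex|/Hs //].
by case: Hq; exists x.
Qed.

Section Largeness.
Variables (L : eqType) (R : word L -> Prop) (P : finType) (k : nat).
Variables (act : L -> P -> P) (gam : P -> L -> word 'I_k) (p0 : P).
Hypothesis k_ge2 : 1 < k.
Hypothesis actK : forall l, involutive (act l).
Hypothesis gam_cocycle : forall l p, feq (gam p l ++ gam (act l p) l) [::].
Hypothesis null_relators : forall r, R r -> null_walk act gam (map fst r).
Hypothesis loops : forall i : 'I_k,
  exists s, walk_end act p0 s = p0 /\ feq (walk_val act gam p0 s) [:: (i, false)].

Local Notation G := (presented_grp R).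
Local Notation wend g := (walk_end act p0 (map fst g)).
Local Notation wval g := (walk_val act gam p0 (map fst g)).

Lemma geq_walk_equiv (x y : G) :
  geq x y -> walk_equiv act gam (map fst x) (map fst y).
Proof.
move/(null_walk_ncl actK gam_cocycle null_relators).
by rewrite map_cat map_fst_winv; exact: walk_equiv_cat_rev.
Qed.

Lemma exists_closed_walk_val (v : word 'I_k) :
  exists s, walk_end act p0 s = p0 /\ feq (walk_val act gam p0 s) v.
Proof.
elim: v => [|[i b] v [s [Es Vs]]]; first by exists [::].
have [t [Et Vt]] := loops i.
have [t' [Et' Vt']] : exists t',
    walk_end act p0 t' = p0 /\ feq (walk_val act gam p0 t') [:: (i, b)].
  case: b; last by exists t.
  exists (rev t); rewrite -{1 3}Et (walk_end_rev actK); split=> //.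
  exact: feq_trans (walk_val_rev actK gam_cocycle p0 t) (feq_winv Vt).
exists (t' ++ s); rewrite walk_end_cat walk_val_cat Et' Es; split=> //.
by rewrite -cat1s; exact: feq_cat.
Qed.

Theorem large_of_walks : large G.
Proof.
pose H (g : G) := wend g = p0.
exists H; split; [split|split].
- by move=> x y /geq_walk_equiv/(_ p0)[Exy _]; rewrite /H Exy.
- by [].
- by move=> x y; rewrite /H /= map_cat walk_end_cat => -> ->.
- by move=> x Hx; rewrite /H /= map_fst_winv -{1}Hx (walk_end_rev actK).
- have [s Hs] := finite_image_transversal (fun g : G => wend g).
  exists (map (@winv L) s) => g; have [y [Hy Ey]] := Hs (winv g).
  exists (winv y); split; first exact: List.in_map.
  rewrite /H /= winvK map_cat walk_end_cat Ey map_fst_winv.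
  by rewrite -{2}(revK (map fst g)) (walk_end_rev actK).
- exists k; split=> //; exists (fun g : G => wval g : free_grp 'I_k); split; [split|].
  + by move=> x y _ _ /geq_walk_equiv/(_ p0)[].
  + by move=> x y Hx _; rewrite /= map_cat walk_val_cat Hx.
  + move=> v; have [s [Es Vs]] := exists_closed_walk_val v.
    by exists [seq (l, false) | l <- s]; rewrite /H -map_comp map_id.
Qed.

End Largeness.

(** * The amalgam of two dihedral groups over Z/2 *)

Inductive gen := Ga | Gb | Gc.

Definition nat_of_gen c := match c with Ga => 0 | Gb => 1 | Gc => 2 end.
Definition gen_of_nat n := match n with 0 => Ga | 1 => Gb | _ => Gc end.
Lemma nat_of_genK : cancel nat_of_gen gen_of_nat. Proof. by case. Qed.
HB.instance Definition _ := Equality.copy gen (can_type nat_of_genK).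

Section ZpSmall.
Local Open Scope ring_scope.
Variable m : nat.
Hypothesis m_gt2 : (2 < m)%N.

Lemma Zp_two_neq0 : (2%:R : 'Z_m) != 0.
Proof.
apply/eqP => /(congr1 (@nat_of_ord _)).
by rewrite val_Zp_nat ?(ltn_trans _ m_gt2) // modn_small.
Qed.

Lemma Zp_small_neq :
  [/\ (1 == -1 :> 'Z_m) = false, (0 == 1 :> 'Z_m) = false, (-1 == 0 :> 'Z_m) = false,
      (-1 == - 2%:R :> 'Z_m) = false & (- 2%:R == 0 :> 'Z_m) = false].
Proof.
have two_neq0 := Zp_two_neq0; have one_neq0 : (1 : 'Z_m) != 0 by exact: oner_neq0.
split; apply/negbTE.
- by rewrite -subr_eq0 opprK -[1 + 1]/(2%:R).
- by rewrite eq_sym oner_eq0.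
- by rewrite oppr_eq0 oner_eq0.
- by rewrite eqr_opp -subr_eq0 -[2%:R]/(1 + 1) opprD addrA subrr add0r oppr_eq0.
- by rewrite oppr_eq0.
Qed.

End ZpSmall.

Definition is_pair (c d x y : gen) : Prop := (x = c /\ y = d) \/ (x = d /\ y = c).

Lemma is_pairC c d x y : is_pair c d x y -> is_pair c d y x.
Proof. by case=> -[-> ->]; [right|left]. Qed.

Section Amalgam.
Local Open Scope ring_scope.
Variables m1 m2 : nat.
Hypotheses (m1_gt2 : (2 < m1)%N) (m2_gt2 : (2 < m2)%N).
Local Notation P := ('Z_m1 * 'Z_m2)%type.

(* Walking along [a; b] translates by (-1, 0), along [b; c] by (0, 1). *)
Definition amalgam_act (c : gen) (p : P) : P :=
  match c with
  | Ga => (1 - p.1, - p.2)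
  | Gb => (- p.1, - p.2)
  | Gc => (- p.1, 1 - p.2)
  end.

(* As [potential] is b-invariant, a walk avoiding c is worth
   potential(start)^-1 potential(end), and a walk avoiding a is worth 1; the support of
   [potential] is placed so that the loops [amalgam_loop] pick up the two generators. *)
Definition potential (p : P) : word 'I_2 :=
  if (p.2 == 0) && ((p.1 == 1) || (p.1 == -1)) then [:: (ord0, false)]
  else if ((p.1 == 1) && (p.2 == - 2%:R)) || ((p.1 == -1) && (p.2 == 2%:R))
  then [:: (ord_max, true)] else [::].

Definition amalgam_cocycle (p : P) (c : gen) : word 'I_2 :=
  if c is Ga then winv (potential p) ++ potential (amalgam_act Ga p) else [::].

Lemma amalgam_actK c : involutive (amalgam_act c).
Proof. by case: c => -[i j] /=; congr pair; ring. Qed.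

Lemma amalgam_cocycle_inv c p :
  feq (amalgam_cocycle p c ++ amalgam_cocycle (amalgam_act c p) c) [::].
Proof.
case: c => //; rewrite /amalgam_cocycle amalgam_actK -catA (catA (potential _)).
apply: feq_trans (feq_cat (feq_refl _) (feq_cat1l _ (feq_winvr _))) (feq_winvl _).
Qed.

Lemma potential_Gb p : potential (amalgam_act Gb p) = potential p.
Proof.
case: p => i j; rewrite /potential /= oppr_eq0 !eqr_oppLR !opprK.
by rewrite (orbC (i == -1)) (orbC (_ && (j == 2%:R))).
Qed.

Local Notation walk_end := (walk_end amalgam_act).
Local Notation walk_val := (walk_val amalgam_act amalgam_cocycle).

Lemma walk_val_notin_Gc s p : Gc \notin s ->
  feq (walk_val p s) (winv (potential p) ++ potential (walk_end p s)).
Proof.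
elim: s p => [|c s IH] p; first by move=> _; exact: feq_sym (feq_winvl _).
rewrite in_cons negb_or => /andP[]; case: c => //= _ /IH {}IH.
  apply: feq_trans (feq_cat (feq_refl _) (IH _)) _; rewrite -!catA.
  by apply: feq_cat => //; rewrite catA; exact: feq_cat1l (feq_winvr _).
by rewrite -potential_Gb; exact: IH.
Qed.

Lemma walk_val_notin_Ga s p : Ga \notin s -> walk_val p s = [::].
Proof. by elim: s p => [|[] s IH] p //=; rewrite in_cons => /IH ->. Qed.

Lemma walk_end_alternating n c d d1 d2 p :
  (forall q, walk_end q [:: c; d] = (q.1 + d1, q.2 + d2)) ->
  walk_end p (alternating n c d) = (p.1 + d1 *+ n, p.2 + d2 *+ n).
Proof.
move=> Hcd; elim: n p => [|n IH] p; first by rewrite /= !addr0; case: p.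
rewrite (alternatingS n c d : _ = [:: c; d] ++ _) walk_end_cat Hcd IH /= !mulrS.
by congr pair; ring.
Qed.

Lemma notin_alternating (x : gen) n c d : x != c -> x != d -> x \notin alternating n c d.
Proof.
move=> xc xd; elim: n => //= n IH.
by rewrite alternatingS !inE negb_or (negbTE xc) (negbTE xd).
Qed.

Lemma null_walk_amalgam_ab x y :
  is_pair Ga Gb x y -> null_walk amalgam_act amalgam_cocycle (alternating m1 x y).
Proof.
suff Hab : null_walk amalgam_act amalgam_cocycle (alternating m1 Ga Gb).
  by case=> -[-> ->] //; exact: (null_walk_alternatingC amalgam_actK amalgam_cocycle_inv).
move=> p; have Ep : walk_end p (alternating m1 Ga Gb) = p.
  rewrite (@walk_end_alternating _ _ _ (-1) 0); last by move=> [i j] /=; congr pair; ring.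
  by rewrite mulNrn pchar_Zp ?(ltn_trans _ m1_gt2) // oppr0 mul0rn !addr0; case: p.
split=> //; apply: feq_trans (walk_val_notin_Gc _ _) _; first exact: notin_alternating.
by rewrite Ep; exact: feq_winvl.
Qed.

Lemma null_walk_amalgam_bc x y :
  is_pair Gb Gc x y -> null_walk amalgam_act amalgam_cocycle (alternating m2 x y).
Proof.
suff Hbc : null_walk amalgam_act amalgam_cocycle (alternating m2 Gb Gc).
  by case=> -[-> ->] //; exact: (null_walk_alternatingC amalgam_actK amalgam_cocycle_inv).
move=> p; rewrite walk_val_notin_Ga ?notin_alternating //; split=> //.
rewrite (@walk_end_alternating _ _ _ 0 1); last by move=> [i j] /=; congr pair; ring.
by rewrite pchar_Zp ?(ltn_trans _ m2_gt2) // mul0rn !addr0; case: p.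
Qed.

Definition amalgam_loop0 := [:: Ga; Gc; Gb; Ga; Gc; Gb].

Lemma walk_amalgam_loop0 j :
  walk_end (0, j) amalgam_loop0 = (0, j) /\
  walk_val (0, j) amalgam_loop0 = winv (potential (0, j)) ++ potential (1, - j)
    ++ winv (potential (1, - 1 - j)) ++ potential (0, 1 + j).
Proof.
split; first by rewrite /=; congr pair; ring.
rewrite /= !cats0 -!catA.
congr (_ ++ (potential _ ++ (winv (potential _) ++ potential _))).
all: by congr pair; ring.
Qed.

Definition amalgam_loop (i : 'I_2) : seq gen :=
  if i == ord0 then amalgam_loop0 else [:: Gb; Gc] ++ amalgam_loop0 ++ [:: Gc; Gb].

Lemma walk_amalgam_loop i :
  walk_end (0, 0) (amalgam_loop i) = (0, 0) /\
  walk_val (0, 0) (amalgam_loop i) = [:: (i, false)].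
Proof.
have [_ _ N1_neq0 N1_neqN2 N2_neq0] := Zp_small_neq m2_gt2.
have [one_neqN1 zero_neq1 N1_neq0' _ _] := Zp_small_neq m1_gt2.
have potential0 j : potential (0, j) = [::].
  by rewrite /potential zero_neq1 (eq_sym 0 (-1)) N1_neq0' !andbF.
rewrite /amalgam_loop; case: ifP => [/eqP ->|/negbT i_neq0].
  have [-> ->] := walk_amalgam_loop0 0; split=> //.
  by rewrite !potential0 oppr0 addr0 /potential eqxx N1_neq0 N1_neqN2 one_neqN1.
have E1 : walk_end (0, 0) [:: Gb; Gc] = (0, 1) by rewrite /=; congr pair; ring.
have [El Vl] := walk_amalgam_loop0 1.
rewrite !walk_end_cat !walk_val_cat E1 El; split; first by rewrite /=; congr pair; ring.
rewrite Vl (@walk_val_notin_Ga [:: Gb; Gc]) // (@walk_val_notin_Ga [:: Gc; Gb]) //.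
rewrite !potential0 /= cats0 (_ : -1 - 1 = - 2%:R); last by ring.
rewrite /potential N2_neq0 one_neqN1 N1_neq0 N1_neqN2 /= eqxx /=.
by congr [:: (_, _)]; apply/val_inj; case: i i_neq0 => -[|[|]].
Qed.

End Amalgam.

(** * Cutting a tree along two edges *)

Section Graph.
Variables (X E : finType) (src tgt : E -> X).

Definition joins (e : E) (x y : X) :=
  ((src e == x) && (tgt e == y)) || ((src e == y) && (tgt e == x)).

Definition adj_in (F : pred E) : rel X := fun x y => [exists e, F e && joins e x y].

Lemma joins_sym e x y : joins e x y = joins e y x.
Proof. by rewrite /joins orbC. Qed.

Lemma adj_in_sym F : symmetric (adj_in F).
Proof. by move=> x y; apply/existsP/existsP => -[e He]; exists e; rewrite joins_sym. Qed.

Lemma joins_other e x x' y y' : joins e x x' -> joins e y y' -> x != y -> x' = y /\ y' = x.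
Proof.
by rewrite /joins => /orP[]/andP[/eqP<- /eqP<-] /orP[]/andP[/eqP<- /eqP<-];
  rewrite ?eqxx.
Qed.

Section ConnectedCard.
Variables (F : pred E) (r : X).
Hypothesis reach_r : forall x, connect (adj_in F) x r.

Let reaches_in (v : X) (n : nat) :=
  [exists p : n.-tuple X, path (adj_in F) v p && (last v p == r)].

Let reaches_in_exists v : exists n, reaches_in v n.
Proof.
have /connectP [p pth lst] := reach_r v.
by exists (size p); apply/existsP; exists (in_tuple p); rewrite /= pth -lst eqxx.
Qed.

Let dist v := ex_minn (reaches_in_exists v).

Let parent_exists v : v != r -> exists2 w, adj_in F v w & dist w < dist v.
Proof.
rewrite {2}/dist; case: ex_minnP => n /existsP[p /andP[pth lst]] min_n vr.
case: p pth lst => -[|w q] //= sz; first by move=> _ /eqP Ev; rewrite Ev eqxx in vr.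
case/andP=> Hvw pq lst; exists w => //; rewrite -(eqP sz) ltnS /dist.
case: ex_minnP => m _; apply; apply/existsP; exists (in_tuple q); exact/andP.
Qed.

(* Send each v != r to an edge joining it to a neighbour closer to r; two vertices sent
   to the same edge would each be closer to r than the other. *)
Lemma card_connected : #|X| <= #|F| + 1.
Proof.
pose par v := odflt v [pick w | adj_in F v w && (dist w < dist v)].
have parP v : v != r -> adj_in F v (par v) && (dist (par v) < dist v).
  move=> /parent_exists [w Hw Dw]; rewrite /par.
  by case: pickP => [w' ->|/(_ w)] //; rewrite Hw Dw.
pose pe v := [pick e | F e && joins e v (par v)].
have peP v : v != r -> exists2 e, pe v = Some e & F e && joins e v (par v).
  move=> /parP /andP[/existsP [e He] _]; rewrite /pe.
  by case: pickP => [e' He'|/(_ e)]; [exists e' | rewrite He].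
have pe_inj : {in [set~ r] &, injective pe}.
  move=> u v; rewrite !inE => ur vr Euv; apply/eqP/negPn/negP => uv.
  have [e Eu /andP[_ Ju]] := peP u ur; have [e' Ev /andP[_ Jv]] := peP v vr.
  move: Ev; rewrite -Euv Eu => -[Ee]; subst e'.
  have [Pu Pv] := joins_other Ju Jv uv.
  have /andP[_] := parP u ur; have /andP[_] := parP v vr.
  by rewrite Pu Pv => /ltn_trans H /H; rewrite ltnn.
have : #|pe @: [set~ r]| <= #|[set Some e | e in F]|.
  apply/subset_leq_card/subsetP => o /imsetP[v]; rewrite !inE => vr ->.
  by have [e -> /andP[Fe _]] := peP v vr; apply/imsetP; exists e.
rewrite (card_in_imset pe_inj) cardsC1 (card_imset _ (@Some_inj _)).
by case: #|X| => // n; rewrite addn1.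
Qed.

End ConnectedCard.
End Graph.

Section Tree.
Variables (X E : finType) (src tgt : E -> X).
Hypothesis tree : is_tree src tgt.

Definition side (e : E) (v : X) := connect (adj_in src tgt (predC1 e)) (src e) v.

Lemma side_tgt e : side e (tgt e) = false.
Proof.
case: tree => _ [cardE conn]; apply/negP => Hst.
have sym := adj_in_sym src tgt (predC1 e).
suff /card_connected : forall x, connect (adj_in src tgt (predC1 e)) x (src e).
  have : 0 < #|E| by apply/card_gt0P; exists e.
  by rewrite cardC1 cardE; lia.
move=> x; apply: connect_sub (conn x (src e)) => a b /existsP[f Jf].
case: (eqVneq f e) Jf => [-> Je|fe Jf].
  by case/orP: Je => /andP[/eqP <- /eqP <-]; rewrite ?connect0 // (sym_connect_sym sym).
by apply: connect1; apply/existsP; exists f; rewrite /= fe.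
Qed.

Lemma side_edge e f : f != e -> side e (src f) = side e (tgt f).
Proof.
move=> fe; have A : adj_in src tgt (predC1 e) (src f) (tgt f).
  by apply/existsP; exists f; rewrite /= fe /joins !eqxx.
apply/idP/idP => H; apply: connect_trans H (connect1 _) => //.
by rewrite adj_in_sym.
Qed.

Lemma tree_cut e z : exists t : X -> bool,
  [/\ t z = false, t (src e) != t (tgt e) & forall f, f != e -> t (src f) = t (tgt f)].
Proof.
exists (fun v => side e v != side e z); split; first by rewrite eqxx.
  have -> : side e (src e) by exact: connect0.
  by rewrite side_tgt; case: (side e z).
by move=> f /side_edge ->.
Qed.

End Tree.

Lemma tree_three_coloring (X E : finType) (src tgt : E -> X) :
  is_tree src tgt -> 3 <= #|X| ->
  exists e1 e2 (col : X -> gen),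
    [/\ is_pair Ga Gb (col (src e1)) (col (tgt e1)),
        is_pair Gb Gc (col (src e2)) (col (tgt e2)),
        forall e, e != e1 -> e != e2 -> col (src e) = col (tgt e) &
        forall c, exists x, col x = c].
Proof.
move=> tree X_ge3; have [_ [cardE _]] := tree.
have /card_gt1P [e1 [e2 [_ _ e12]]] : 1 < #|E| by rewrite cardE; lia.
have [t1 [t1z t1e1 t1f]] := tree_cut tree e1 (src e2).
have [t2 [t2z t2e2 t2f]] := tree_cut tree e2 (src e1).
have t1e2 : t1 (tgt e2) = false by rewrite -t1f // eq_sym.
have t2e1 : t2 (tgt e1) = false by rewrite -t2f.
pose col v := if t1 v then Ga else if t2 v then Gc else Gb.
have P1 : is_pair Ga Gb (col (src e1)) (col (tgt e1)).
  by rewrite /col t2z t2e1; case: (t1 _) (t1 _) t1e1 => [] [] // _; by [left|right].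
have P2 : is_pair Gb Gc (col (src e2)) (col (tgt e2)).
  by rewrite /col t1z t1e2; case: (t2 _) (t2 _) t2e2 => [] [] // _; by [left|right].
exists e1, e2, col; split=> // [e ne1 ne2|].
  by rewrite /col t1f // t2f.
case; [case: P1|case: P1|case: P2] => -[Ex Ey];
  by [exists (src e1)|exists (tgt e1)|exists (src e2)|exists (tgt e2)].
Qed.

Unset Implicit Arguments.
Theorem theorem4p1 (X E : finType) (src tgt : E -> X) (lab : E -> word X) :
  is_tree src tgt ->
  3 <= #|X| ->
  coxeter_type src tgt lab ->
  (forall e : E, exists m : nat, 3 <= m /\ coxeter_label src tgt lab e m) ->
  large (lot_group src tgt lab).
Proof.
(* The Coxeter-type hypothesis is only needed for the labels m_e to exist. *)
move=> tree X_ge3 _ labels.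
have [e1 [e2 [col [col_e1 col_e2 col_e col_onto]]]] := tree_three_coloring tree X_ge3.
have [m1 [m1_gt2 lab_e1]] := labels e1; have [m2 [m2_gt2 lab_e2]] := labels e2.
pose act x := @amalgam_act m1 m2 (col x).
pose gam p x := @amalgam_cocycle m1 m2 p (col x).
have actK x : involutive (act x) by exact: amalgam_actK.
have gam_cocycle x p : feq (gam p x ++ gam (act x p) x) [::] by exact: amalgam_cocycle_inv.
have null_rel e m : coxeter_label src tgt lab e m ->
    null_walk (@amalgam_act m1 m2) (@amalgam_cocycle m1 m2)
      (alternating m (col (tgt e)) (col (src e))) ->
    null_walk act gam (map fst (lot_rel src tgt lab e)).
  move=> lab_e Hm; apply: null_walk_cimage lab_e _ => //.
  by apply: null_walk_map; rewrite map_alternating.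
apply: (@large_of_walks _ _ _ 2 act gam (0, 0)%R) => // [_ [e ->]|i].
  have [->|ne1] := eqVneq e e1.
    exact/(null_rel _ _ lab_e1)/null_walk_amalgam_ab/is_pairC.
  have [->|ne2] := eqVneq e e2.
    exact/(null_rel _ _ lab_e2)/null_walk_amalgam_bc/is_pairC.
  have [m [_ lab_e]] := labels e; apply: null_rel lab_e _.
  rewrite col_e //; apply: null_walk_alternating_same.
  - exact: amalgam_actK.
  - exact: amalgam_cocycle_inv.
have [s Es] := map_preimage col_onto (amalgam_loop i).
exists s; rewrite walk_end_map walk_val_map Es.
by have [-> ->] := walk_amalgam_loop m1_gt2 m2_gt2 i.
Qed.
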